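(* Let $\Gamma\subset X\times X$ with $\Gamma\subset\{(x,y):d_L(x,y)<+\infty\}$ and let $\Gamma'$ be defined from $\Gamma$ as in the context. Then: (1) $\Gamma\subset\Gamma'\subset\{(x,y):d_L(x,y)<+\infty\}$; (2) if $\Gamma$ is analytic, then $\Gamma'$ is analytic; (3) if $\Gamma$ is $d_L$-cyclically monotone, then $\Gamma'$ is $d_L$-cyclically monotone.
   Context: $(X,d)$ is a Polish space and $d_L:X\times X\to[0,+\infty]$ is a distance on $X$ (it may take the value $+\infty$) which is a Borel function on $(X\times X,d\times d)$. A set $A\subset Y$ of a Polish space is analytic if it is the projection of a Borel subset of $Y\times Z$ for some Polish $Z$. A set $\Gamma\subset X\times X$ is $d_L$-cyclically monotone if for every $n$ and all $(x_0,y_0),\dots,(x_n,y_n)\in\Gamma$ one has $\sum_{i=0}^n d_L(x_i,y_i)\le\sum_{i=0}^n d_L(x_{i+1},y_i)$, where $x_{n+1}=x_0$. Given $\Gamma$, define $\Gamma'$ as the set of pairs $(x,y)$ for which there exist $I\in\{0,1,2,\dots\}$ and points $(w_i,z_i)\in\Gamma$, $i=0,\dots,I$, with $w_0=x$, $z_I=y$, and, setting $w_{I+1}:=w_0$, $\sum_{i=0}^I\big(d_L(w_{i+1},z_i)-d_L(w_i,z_i)\big)=0$. *)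

From Stdlib Require Import Reals Lra Arith.
Open Scope R_scope.

Definition is_metric {X : Type} (d : X -> X -> R) : Prop :=
  (forall x y, 0 <= d x y) /\
  (forall x y, d x y = 0 <-> x = y) /\
  (forall x y, d x y = d y x) /\
  (forall x y z, d x z <= d x y + d y z).

Definition cauchy_seq {X : Type} (d : X -> X -> R) (u : nat -> X) : Prop :=
  forall eps, 0 < eps -> exists N, forall m n, (N <= m)%nat -> (N <= n)%nat -> d (u m) (u n) < eps.

Definition converges_to {X : Type} (d : X -> X -> R) (u : nat -> X) (l : X) : Prop :=
  forall eps, 0 < eps -> exists N, forall n, (N <= n)%nat -> d (u n) l < eps.

Definition complete {X : Type} (d : X -> X -> R) : Prop :=
  forall u, cauchy_seq d u -> exists l, converges_to d u l.

(* countable dense subset (option allows the empty space) *)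
Definition separable {X : Type} (d : X -> X -> R) : Prop :=
  exists u : nat -> option X, forall x eps, 0 < eps ->
    exists n y, u n = Some y /\ d x y < eps.

Definition polish {X : Type} (d : X -> X -> R) : Prop :=
  is_metric d /\ complete d /\ separable d.

Definition metric_open {X : Type} (d : X -> X -> R) (U : X -> Prop) : Prop :=
  forall x, U x -> exists eps, 0 < eps /\ forall y, d x y < eps -> U y.

Definition prod_dist {X Y : Type} (d1 : X -> X -> R) (d2 : Y -> Y -> R)
  (p q : X * Y) : R := Rmax (d1 (fst p) (fst q)) (d2 (snd p) (snd q)).

Definition is_sigma_algebra {T : Type} (S : (T -> Prop) -> Prop) : Prop :=
  S (fun _ => False) /\
  (forall A, S A -> S (fun x => ~ A x)) /\
  (forall A : nat -> T -> Prop, (forall n, S (A n)) -> S (fun x => exists n, A n x)).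

Definition borel {T : Type} (opn : (T -> Prop) -> Prop) (A : T -> Prop) : Prop :=
  forall S, is_sigma_algebra S -> (forall U, opn U -> S U) -> S A.

Inductive ereal : Type := Fin : R -> ereal | PInf : ereal.

Definition eadd (a b : ereal) : ereal :=
  match a, b with Fin x, Fin y => Fin (x + y) | _, _ => PInf end.

Definition ele (a b : ereal) : Prop :=
  match a, b with
  | Fin x, Fin y => x <= y
  | _, PInf => True
  | PInf, Fin _ => False
  end.

Definition ereal_open (U : ereal -> Prop) : Prop :=
  (forall r, U (Fin r) -> exists eps, 0 < eps /\ forall s, Rabs (s - r) < eps -> U (Fin s)) /\
  (U PInf -> exists M, forall s, M < s -> U (Fin s)).

Fixpoint esum (f : nat -> ereal) (n : nat) : ereal :=
  match n with
  | O => f O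
  | S k => eadd (esum f k) (f (S k))
  end.

Definition ext_distance {X : Type} (dL : X -> X -> ereal) : Prop :=
  (forall x y r, dL x y = Fin r -> 0 <= r) /\
  (forall x y, dL x y = Fin 0 <-> x = y) /\
  (forall x y, dL x y = dL y x) /\
  (forall x y z, ele (dL x z) (eadd (dL x y) (dL y z))).

Definition borel_fun {X : Type} (d : X -> X -> R) (dL : X -> X -> ereal) : Prop :=
  forall B, borel ereal_open B ->
    borel (metric_open (prod_dist d d)) (fun p : X * X => B (dL (fst p) (snd p))).

Definition analytic {Y : Type} (dY : Y -> Y -> R) (A : Y -> Prop) : Prop :=
  exists (Z : Type) (dZ : Z -> Z -> R), polish dZ /\
    exists B : Y * Z -> Prop, borel (metric_open (prod_dist dY dZ)) B /\
      forall y, A y <-> exists z, B (y, z).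

Definition cyc_next {X : Type} (x : nat -> X) (n i : nat) : X :=
  if Nat.eqb i n then x O else x (S i).

Definition cyc_mono {X : Type} (dL : X -> X -> ereal) (G : X * X -> Prop) : Prop :=
  forall (n : nat) (x y : nat -> X),
    (forall i, (i <= n)%nat -> G (x i, y i)) ->
    ele (esum (fun i => dL (x i) (y i)) n)
        (esum (fun i => dL (cyc_next x n i) (y i)) n).

(* Gamma': sum_{i=0}^I (d_L(w_{i+1},z_i) - d_L(w_i,z_i)) = 0, written as the
   equality of the two (extended) sums *)
Definition Gprime {X : Type} (dL : X -> X -> ereal) (G : X * X -> Prop) (p : X * X) : Prop :=
  exists (I : nat) (w z : nat -> X),
    (forall i, (i <= I)%nat -> G (w i, z i)) /\
    w O = fst p /\ z I = snd p /\
    esum (fun i => dL (cyc_next w I i) (z i)) I = esum (fun i => dL (w i) (z i)) I.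

(* Along a chain for [p] in [Gprime], the
   equality of the two sums, one of which is finite, makes every [dL w_(i+1) z_i] finite,
   and the triangle inequality along [w_0, z_0, w_1, z_1, ..., z_I] bounds [dL w_0 z_I].
   (2) [Gprime] is the projection of the set of pairs [(p, l)] where the list [l] records a
   chain for [p], a witness of each of its points in a Borel set projecting onto [G], and the
   real values of the [dL] terms. Lists over a Polish space form a Polish space, and this set
   is Borel since the graph of a Borel function is Borel.
   (3) Concatenating chains in [G] for the pairs of a cycle in [Gprime] gives a cycle in [G]
   whose two cyclic sums exceed those of the original cycle by the same finite amount. *)

From Stdlib Require Import Reals Lra Lia Arith List Cantor Classical
  FunctionalExtensionality PropExtensionality.
Import ListNotations.
Open Scope R_scope.

Lemma eadd_comm a b : eadd a b = eadd b a.
Proof. destruct a, b; simpl; auto. f_equal; ring. Qed.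

Lemma eadd_assoc a b c : eadd a (eadd b c) = eadd (eadd a b) c.
Proof. destruct a, b, c; simpl; auto. f_equal; ring. Qed.

Lemma eadd_0_l a : eadd (Fin 0) a = a.
Proof. destruct a; simpl; auto. f_equal; ring. Qed.

Lemma eadd_0_r a : eadd a (Fin 0) = a.
Proof. rewrite eadd_comm; apply eadd_0_l. Qed.

Lemma eadd_neq_PInf a b : eadd a b <> PInf <-> a <> PInf /\ b <> PInf.
Proof. destruct a, b; simpl; intuition congruence. Qed.

Lemma ele_eadd2l s a b : s <> PInf -> ele (eadd s a) (eadd s b) -> ele a b.
Proof. destruct s, a, b; simpl; auto; try lra; congruence. Qed.

Fixpoint lsum (l : list ereal) : ereal :=
  match l with [] => Fin 0 | a :: t => eadd a (lsum t) end.

Lemma lsum_app l m : lsum (l ++ m) = eadd (lsum l) (lsum m).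
Proof.
  induction l as [|a l IH]; cbn [app lsum]; [now rewrite eadd_0_l|].
  now rewrite IH, eadd_assoc.
Qed.

Lemma lsum_map_eadd {A} (f g : A -> ereal) l :
  lsum (map (fun a => eadd (f a) (g a)) l) = eadd (lsum (map f l)) (lsum (map g l)).
Proof.
  induction l as [|a l IH]; cbn [map lsum]; [now rewrite eadd_0_l|].
  rewrite IH, !eadd_assoc.
  f_equal. rewrite <- !eadd_assoc. f_equal. apply eadd_comm.
Qed.

Lemma lsum_neq_PInf l : (forall a, In a l -> a <> PInf) -> lsum l <> PInf.
Proof.
  induction l as [|a l IH]; simpl; intros H; [discriminate|].
  apply eadd_neq_PInf; auto.
Qed.

Lemma esum_ext f g n : (forall i, (i <= n)%nat -> f i = g i) -> esum f n = esum g n.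
Proof. induction n; intros H; simpl; [apply H; lia|]. rewrite IHn, H; auto. Qed.

Lemma esum_lsum f n : esum f n = lsum (map f (seq 0 (S n))).
Proof.
  induction n; [simpl; now rewrite eadd_0_r|].
  cbn [esum]. rewrite IHn, (seq_S (S n) 0), map_app, lsum_app. simpl. now rewrite eadd_0_r.
Qed.

Lemma esum_Fin f g n : (forall i, (i <= n)%nat -> f i = Fin (g i)) ->
  esum f n = Fin (sum_f_R0 g n).
Proof. induction n; intros H; simpl; [apply H; lia|]. rewrite IHn, H; auto. Qed.

Lemma esum_neq_PInf f n : (forall i, (i <= n)%nat -> f i <> PInf) -> esum f n <> PInf.
Proof.
  induction n; intros H; simpl; [apply H; lia|].
  apply eadd_neq_PInf; split; auto.
Qed.

Lemma esum_term_neq_PInf f n i : esum f n <> PInf -> (i <= n)%nat -> f i <> PInf.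
Proof.
  induction n; simpl; intros H Hi; [now replace i with 0%nat by lia|].
  apply eadd_neq_PInf in H as [H1 H2].
  destruct (Nat.eq_dec i (S n)) as [->|]; auto. apply IHn; auto; lia.
Qed.

Lemma list_choice {A} (d : A) (P : nat -> A -> Prop) n :
  (forall i, (i <= n)%nat -> exists a, P i a) ->
  exists l, length l = S n /\ forall i, (i <= n)%nat -> P i (nth i l d).
Proof.
  revert P; induction n; intros P H.
  - destruct (H 0%nat) as [a Ha]; [lia|].
    exists [a]; split; auto. intros i Hi; now replace i with 0%nat by lia.
  - destruct (H 0%nat) as [a Ha]; [lia|].
    destruct (IHn (fun i => P (S i))) as (l & Hl & HP); [intros i Hi; apply H; lia|].
    exists (a :: l); split; [simpl; lia|]. intros [|i] Hi; auto. apply HP; lia.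
Qed.

Lemma last_map {A B} (f : A -> B) l d : last (map f l) (f d) = f (last l d).
Proof. induction l as [|a [|b l] IH]; simpl in *; auto. Qed.

Lemma last_app_r {A} (l m : list A) d : m <> [] -> last (l ++ m) d = last m d.
Proof.
  intros Hm. induction l as [|a l IH]; simpl; auto.
  rewrite IH. destruct l, m; simpl; congruence.
Qed.

Lemma last_indep {A} (l : list A) d d' : l <> [] -> last l d = last l d'.
Proof.
  induction l as [|a [|b l] IH]; intros H; [congruence|reflexivity|apply IH; discriminate].
Qed.

Lemma hd_app_l {A} (l m : list A) d : l <> [] -> hd d (l ++ m) = hd d l.
Proof. destruct l; simpl; congruence. Qed.

Lemma hd_indep {A} (l : list A) d d' : l <> [] -> hd d l = hd d' l.
Proof. destruct l; simpl; congruence. Qed.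

Lemma map_nth_seq {A} (l : list A) d : map (fun i => nth i l d) (seq 0 (length l)) = l.
Proof.
  induction l as [|a l IH]; simpl; auto. f_equal.
  rewrite <- seq_shift, map_map. exact IH.
Qed.

(** * Chains *)

Section GprimeBasics.

Context {X : Type} (dL : X -> X -> ereal) (G : X * X -> Prop).
Hypothesis Gfin : forall p, G p -> dL (fst p) (snd p) <> PInf.

Lemma Gprime_incl p : G p -> Gprime dL G p.
Proof.
  intros Hp. exists 0%nat, (fun _ => fst p), (fun _ => snd p). repeat split; auto.
  intros i _. now rewrite <- surjective_pairing.
Qed.

(* Equality with the finite sum [sum_i dL w_i z_i] forces every [dL w_(i+1) z_i] to be finite. *)
Lemma Gprime_links_fin I w z :
  (forall i, (i <= I)%nat -> G (w i, z i)) ->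
  esum (fun i => dL (cyc_next w I i) (z i)) I = esum (fun i => dL (w i) (z i)) I ->
  forall i, (i <= I)%nat -> dL (cyc_next w I i) (z i) <> PInf.
Proof.
  intros HG Heq i Hi.
  apply (esum_term_neq_PInf (fun i => dL (cyc_next w I i) (z i)) I); auto. rewrite Heq.
  apply esum_neq_PInf. intros j Hj. apply (Gfin (w j, z j)), HG, Hj.
Qed.

Lemma ext_distance_fin_trans (HdL : ext_distance dL) x y z :
  dL x y <> PInf -> dL y z <> PInf -> dL x z <> PInf.
Proof.
  destruct HdL as (_ & _ & _ & Htri). intros Hxy Hyz Hxz. specialize (Htri x y z).
  rewrite Hxz in Htri. destruct (dL x y), (dL y z); simpl in Htri; congruence.
Qed.

(* Walk along the chain [w_0 -> z_0 -> w_1 -> z_1 -> ... -> z_I]. *)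
Lemma Gprime_fin (HdL : ext_distance dL) p : Gprime dL G p -> dL (fst p) (snd p) <> PInf.
Proof.
  intros (I & w & z & HG & H0 & HI & Heq). rewrite <- H0, <- HI.
  assert (Hlink := Gprime_links_fin I w z HG Heq).
  enough (H : forall j, (j <= I)%nat -> dL (w 0%nat) (z j) <> PInf) by auto.
  induction j; intros Hj.
  - apply (Gfin (w 0%nat, z 0%nat)), HG; lia.
  - apply (ext_distance_fin_trans HdL _ (w (S j))).
    + apply (ext_distance_fin_trans HdL _ (z j)); [apply IHj; lia|].
      destruct HdL as (_ & _ & Hsym & _). rewrite Hsym.
      specialize (Hlink j ltac:(lia)). unfold cyc_next in Hlink.
      destruct (Nat.eqb_spec j I); [lia|auto].
    + apply (Gfin (w (S j), z (S j))), HG; lia.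
Qed.

End GprimeBasics.

Section Chains.

Context {X : Type} (dL : X -> X -> ereal).

Definition cost (C : list (X * X)) : ereal :=
  lsum (map (fun p => dL (fst p) (snd p)) C).

Fixpoint link_cost (C : list (X * X)) : ereal :=
  match C with
  | p :: (q :: _) as t => eadd (dL (fst q) (snd p)) (link_cost t)
  | _ => Fin 0
  end.

(* For [C = [(w_0,z_0); ...; (w_I,z_I)]] this is [sum_i dL w_(i+1) z_i] with
   [w_(I+1) = w_0], as in [cyc_mono] and [Gprime]. *)
Definition cycle_cost (C : list (X * X)) : ereal :=
  match C with
  | [] => Fin 0
  | p :: _ => eadd (link_cost C) (dL (fst p) (snd (last C p)))
  end.

Definition pairs (x y : nat -> X) (a m : nat) : list (X * X) :=
  map (fun i => (x i, y i)) (seq a m).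

Lemma last_pairs x y n d : last (pairs x y 0 (S n)) d = (x n, y n).
Proof.
  unfold pairs. rewrite (last_indep _ d (x 0%nat, y 0%nat)) by discriminate.
  rewrite (last_map (fun i => (x i, y i)) _ 0%nat), seq_S, last_last. reflexivity.
Qed.

Definition chain_from_to (p : X * X) (C : list (X * X)) : Prop :=
  C <> [] /\ fst (hd p C) = fst p /\ snd (last C p) = snd p.

Lemma cost_app C D : cost (C ++ D) = eadd (cost C) (cost D).
Proof. unfold cost. now rewrite map_app, lsum_app. Qed.

Lemma cost_flat_map (K : list ((X * X) * list (X * X))) :
  cost (flat_map snd K) = lsum (map (fun qc => cost (snd qc)) K).
Proof. induction K as [|qc K IH]; simpl; auto. now rewrite cost_app, IH. Qed.

Lemma link_cost_app C D p : C <> [] -> D <> [] ->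
  link_cost (C ++ D) =
  eadd (link_cost C) (eadd (dL (fst (hd p D)) (snd (last C p))) (link_cost D)).
Proof.
  intros HC HD. induction C as [|a [|b C] IH]; [congruence| |].
  - destruct D as [|c D]; [congruence|]. cbn [app link_cost last hd]. now rewrite eadd_0_l.
  - change ((a :: b :: C) ++ D) with (a :: (b :: C) ++ D).
    change (link_cost (a :: (b :: C) ++ D))
      with (eadd (dL (fst b) (snd a)) (link_cost ((b :: C) ++ D))).
    rewrite IH by discriminate. now rewrite eadd_assoc.
Qed.

Lemma link_cost_pairs x y a m :
  link_cost (pairs x y a (S m)) = lsum (map (fun i => dL (x (S i)) (y i)) (seq a m)).
Proof.
  revert a; induction m; intros a; simpl; auto.
  unfold pairs in IHm. rewrite <- IHm. reflexivity.
Qed.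

Lemma esum_cost_pairs x y n :
  esum (fun i => dL (x i) (y i)) n = cost (pairs x y 0 (S n)).
Proof. rewrite esum_lsum. unfold cost, pairs. now rewrite map_map. Qed.

Lemma esum_cycle_cost_pairs x y n :
  esum (fun i => dL (cyc_next x n i) (y i)) n = cycle_cost (pairs x y 0 (S n)).
Proof.
  change (pairs x y 0 (S n)) with ((x 0%nat, y 0%nat) :: pairs x y 1 n).
  unfold cycle_cost.
  change ((x 0%nat, y 0%nat) :: pairs x y 1 n) with (pairs x y 0 (S n)).
  rewrite link_cost_pairs, last_pairs.
  destruct n as [|n]; simpl fst; simpl snd.
  - cbn [esum seq map lsum]. now rewrite eadd_0_l.
  - cbn [esum]. unfold cyc_next at 2. rewrite Nat.eqb_refl.
    rewrite (esum_ext _ (fun i => dL (x (S i)) (y i))), esum_lsum; auto.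
    intros i Hi. unfold cyc_next. destruct (Nat.eqb_spec i (S n)); [lia|auto].
Qed.

Lemma cycle_cost_chain p C : chain_from_to p C ->
  cycle_cost C = eadd (link_cost C) (dL (fst p) (snd p)).
Proof.
  intros (HC & Hhd & Hlast). destruct C as [|c C]; [congruence|].
  simpl in Hhd. unfold cycle_cost. rewrite Hhd, (last_indep _ c p), Hlast by discriminate.
  reflexivity.
Qed.

Lemma cyc_mono_cycle_cost G : cyc_mono dL G ->
  forall C, C <> [] -> Forall G C -> ele (cost C) (cycle_cost C).
Proof.
  intros Hcm C HC HG. destruct C as [|p C']; [congruence|].
  set (x := fun i => fst (nth i (p :: C') p)). set (y := fun i => snd (nth i (p :: C') p)).
  assert (E : pairs x y 0 (S (length C')) = p :: C').
  { unfold pairs, x, y.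
    transitivity (map (fun i => nth i (p :: C') p) (seq 0 (length (p :: C')))).
    - apply map_ext. intros i. now destruct (nth i (p :: C') p).
    - apply map_nth_seq. }
  rewrite <- E, <- esum_cost_pairs, <- esum_cycle_cost_pairs. apply Hcm.
  intros i Hi. rewrite Forall_forall in HG. unfold x, y. rewrite <- surjective_pairing.
  apply HG, nth_In. simpl; lia.
Qed.

Lemma Gprime_chain G p : Gprime dL G p ->
  exists C, chain_from_to p C /\ Forall G C /\ cycle_cost C = cost C.
Proof.
  intros (I & w & z & HG & H0 & HI & Heq).
  exists (pairs w z 0 (S I)). repeat split.
  - unfold pairs; discriminate.
  - exact H0.
  - now rewrite last_pairs.
  - apply Forall_forall. intros q Hq. unfold pairs in Hq. apply in_map_iff in Hq.
    destruct Hq as (i & <- & Hi). apply in_seq in Hi. apply HG; lia.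
  - now rewrite <- esum_cycle_cost_pairs, <- esum_cost_pairs.
Qed.

Lemma chain_concat (K : list ((X * X) * list (X * X))) p :
  Forall (fun qc => chain_from_to (fst qc) (snd qc)) K -> chain_from_to p (map fst K) ->
  chain_from_to p (flat_map snd K) /\
  link_cost (flat_map snd K) =
  eadd (lsum (map (fun qc => link_cost (snd qc)) K)) (link_cost (map fst K)).
Proof.
  revert p. induction K as [|[q C] [|[q' C'] K] IH]; intros p HK (HKne & Hhd & Hlast);
    [now destruct HKne| |]; inversion HK as [|? ? (HC & HChd & HClast) HK']; subst;
    cbn [fst snd map flat_map hd] in *.
  - rewrite app_nil_r. cbn in Hlast. repeat split; auto.
    + now rewrite (hd_indep _ p q), HChd.
    + now rewrite (last_indep _ p q), HClast.
    + simpl. now rewrite eadd_0_r, eadd_0_r.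
  - assert (Hrest : chain_from_to (fst q', snd p) (q' :: map fst K)).
    { repeat split; [discriminate|].
      rewrite (last_indep _ _ p) by discriminate. exact Hlast. }
    destruct (IH _ HK' Hrest) as ((HF & HFhd & HFlast) & HFlink).
    repeat split.
    + destruct C; [contradiction|discriminate].
    + now rewrite hd_app_l, (hd_indep _ p q), HChd.
    + now rewrite last_app_r, (last_indep _ p (fst q', snd p)), HFlast.
    + rewrite (link_cost_app _ _ q), (hd_indep _ q (fst q', snd p)), HFhd, HClast, HFlink
        by auto.
      change (link_cost (q :: q' :: map fst K))
        with (eadd (dL (fst q') (snd q)) (link_cost (q' :: map fst K))).
      cbn [lsum]. rewrite <- !eadd_assoc. f_equal.
      rewrite (eadd_comm (dL (fst q') (snd q))), <- !eadd_assoc. do 2 f_equal.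
      apply eadd_comm.
Qed.

Lemma chain_concat_costs (K : list ((X * X) * list (X * X))) p :
  Forall (fun qc => chain_from_to (fst qc) (snd qc) /\ cycle_cost (snd qc) = cost (snd qc)
                    /\ cost (snd qc) <> PInf) K ->
  chain_from_to p (map fst K) ->
  exists s, s <> PInf /\ chain_from_to p (flat_map snd K) /\
    cost (flat_map snd K) = eadd s (cost (map fst K)) /\
    cycle_cost (flat_map snd K) = eadd s (cycle_cost (map fst K)).
Proof.
  intros HK Hp. rewrite Forall_forall in HK.
  destruct (chain_concat K p) as [Hflat Hlink]; auto.
  { apply Forall_forall. intros qc Hqc. apply HK, Hqc. }
  assert (Hexcess : forall qc, In qc K ->
    cost (snd qc) = eadd (link_cost (snd qc)) (dL (fst (fst qc)) (snd (fst qc)))).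
  { intros qc Hqc. destruct (HK qc Hqc) as (Hc & Hcyc & _).
    rewrite <- Hcyc. now apply cycle_cost_chain. }
  exists (lsum (map (fun qc => link_cost (snd qc)) K)). split; [|split; [exact Hflat|split]].
  - apply lsum_neq_PInf. intros a Ha. apply in_map_iff in Ha as (qc & <- & Hqc).
    destruct (HK qc Hqc) as (_ & _ & Hfin). rewrite Hexcess in Hfin by auto.
    now apply eadd_neq_PInf in Hfin.
  - rewrite cost_flat_map, (map_ext_in _ _ _ Hexcess), lsum_map_eadd.
    unfold cost. now rewrite map_map.
  - rewrite (cycle_cost_chain p), (cycle_cost_chain p (map fst K)), Hlink by auto.
    now rewrite eadd_assoc.
Qed.

Lemma cyc_mono_Gprime G : (forall p, G p -> dL (fst p) (snd p) <> PInf) ->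
  cyc_mono dL G -> cyc_mono dL (Gprime dL G).
Proof.
  intros Hfin Hcm n x y Hxy.
  destruct (list_choice [] (fun j C => chain_from_to (x j, y j) C /\ Forall G C
                                       /\ cycle_cost C = cost C) n) as (Cs & _ & HCs).
  { intros j Hj. now apply Gprime_chain, Hxy. }
  set (K := map (fun j => ((x j, y j), nth j Cs [])) (seq 0 (S n))).
  assert (HK : map fst K = pairs x y 0 (S n)) by (unfold K; now rewrite map_map).
  assert (HKin : forall qc, In qc K -> exists j, (j <= n)%nat /\ qc = ((x j, y j), nth j Cs [])).
  { intros qc Hqc. apply in_map_iff in Hqc as (j & <- & Hj). apply in_seq in Hj.
    exists j; split; [lia|reflexivity]. }
  destruct (chain_concat_costs K (x 0%nat, y n)) as (s & Hs & Hflat & Hcost & Hcycle).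
  - apply Forall_forall. intros qc Hqc. destruct (HKin qc Hqc) as (j & Hj & ->).
    destruct (HCs j Hj) as (Hc & HG & Hcyc). repeat split; try apply Hc; auto.
    apply lsum_neq_PInf. intros a Ha. apply in_map_iff in Ha as (q & <- & Hq).
    rewrite Forall_forall in HG. auto.
  - rewrite HK. repeat split; [discriminate|]. now rewrite last_pairs.
  - rewrite esum_cost_pairs, esum_cycle_cost_pairs, <- HK.
    apply (ele_eadd2l s); auto. rewrite <- Hcost, <- Hcycle.
    apply (cyc_mono_cycle_cost G Hcm); [apply Hflat|].
    apply Forall_forall. intros q Hq. apply in_flat_map in Hq as (qc & Hqc & Hq).
    destruct (HKin qc Hqc) as (j & Hj & ->). destruct (HCs j Hj) as (_ & HG & _).
    rewrite Forall_forall in HG. auto.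
Qed.

End Chains.

(** * Borel sets and continuous maps *)

Section BorelSets.

Context {T : Type} {opn : (T -> Prop) -> Prop}.

Lemma borel_ext (A B : T -> Prop) : (forall x, A x <-> B x) -> borel opn A -> borel opn B.
Proof.
  intros H HA. replace B with A; auto.
  apply functional_extensionality; intros x. apply propositional_extensionality, H.
Qed.

Lemma borel_of_open U : opn U -> borel opn U.
Proof. intros HU S _ HS. auto. Qed.

Lemma borel_empty : borel opn (fun _ => False).
Proof. intros S HS _. apply HS. Qed.

Lemma borel_compl A : borel opn A -> borel opn (fun x => ~ A x).
Proof. intros HA S HS Hop. apply HS, HA; auto. Qed.

Lemma borel_countable_union (A : nat -> T -> Prop) :
  (forall n, borel opn (A n)) -> borel opn (fun x => exists n, A n x).
Proof. intros HA S HS Hop. apply HS. intros n; apply HA; auto. Qed.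

Lemma borel_full : borel opn (fun _ => True).
Proof.
  apply (borel_ext (fun x => ~ False)); [tauto|]. apply borel_compl, borel_empty.
Qed.

Lemma borel_countable_inter (A : nat -> T -> Prop) :
  (forall n, borel opn (A n)) -> borel opn (fun x => forall n, A n x).
Proof.
  intros HA. apply (borel_ext (fun x => ~ exists n, ~ A n x)).
  - intros x; split; [|firstorder]. intros H n. apply NNPP. eauto.
  - apply borel_compl, borel_countable_union. intros n. apply borel_compl, HA.
Qed.

Lemma borel_and A B : borel opn A -> borel opn B -> borel opn (fun x => A x /\ B x).
Proof.
  intros HA HB.
  apply (borel_ext (fun x => forall n, if Nat.eqb n 0 then A x else B x)).
  - intros x; split; [intros H; exact (conj (H 0%nat) (H 1%nat))|].
    intros [HAx HBx] n; destruct (Nat.eqb n 0); auto.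
  - apply borel_countable_inter. intros n; destruct (Nat.eqb n 0); auto.
Qed.

End BorelSets.

Definition continuous_map {A B} (dA : A -> A -> R) (dB : B -> B -> R) (f : A -> B) : Prop :=
  forall a eps, 0 < eps ->
    exists delta, 0 < delta /\ forall a', dA a a' < delta -> dB (f a) (f a') < eps.

Section ContinuousMaps.

Context {A B C : Type} {dA : A -> A -> R} {dB : B -> B -> R} {dC : C -> C -> R}.

Lemma continuous_map_id : continuous_map dA dA (fun a => a).
Proof. intros a eps Heps. exists eps; auto. Qed.

Lemma continuous_map_comp (f : A -> B) (g : B -> C) :
  continuous_map dA dB f -> continuous_map dB dC g -> continuous_map dA dC (fun a => g (f a)).
Proof.
  intros Hf Hg a eps Heps. destruct (Hg (f a) eps Heps) as (d1 & Hd1 & H1).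
  destruct (Hf a d1 Hd1) as (d2 & Hd2 & H2). exists d2; auto.
Qed.

Lemma continuous_map_fst (f : A -> B * C) :
  continuous_map dA (prod_dist dB dC) f -> continuous_map dA dB (fun a => fst (f a)).
Proof.
  intros Hf a eps Heps. destruct (Hf a eps Heps) as (delta & Hdelta & H).
  exists delta; split; auto. intros a' Ha'.
  eapply Rle_lt_trans; [apply Rmax_l|apply H, Ha'].
Qed.

Lemma continuous_map_snd (f : A -> B * C) :
  continuous_map dA (prod_dist dB dC) f -> continuous_map dA dC (fun a => snd (f a)).
Proof.
  intros Hf a eps Heps. destruct (Hf a eps Heps) as (delta & Hdelta & H).
  exists delta; split; auto. intros a' Ha'.
  eapply Rle_lt_trans; [apply Rmax_r|apply H, Ha'].
Qed.

Lemma continuous_map_pair (f : A -> B) (g : A -> C) :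
  continuous_map dA dB f -> continuous_map dA dC g ->
  continuous_map dA (prod_dist dB dC) (fun a => (f a, g a)).
Proof.
  intros Hf Hg a eps Heps. destruct (Hf a eps Heps) as (d1 & Hd1 & H1).
  destruct (Hg a eps Heps) as (d2 & Hd2 & H2). exists (Rmin d1 d2); split.
  - apply Rmin_pos; auto.
  - intros a' Ha'. apply Rmax_lub_lt.
    + apply H1. eapply Rlt_le_trans; [exact Ha'|apply Rmin_l].
    + apply H2. eapply Rlt_le_trans; [exact Ha'|apply Rmin_r].
Qed.

Lemma metric_open_preimage (f : A -> B) U :
  continuous_map dA dB f -> metric_open dB U -> metric_open dA (fun a => U (f a)).
Proof.
  intros Hf HU a Ha. destruct (HU _ Ha) as (eps & Heps & H).
  destruct (Hf a eps Heps) as (delta & Hdelta & H'). exists delta; auto.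
Qed.

(* The sets whose preimage is Borel form a sigma-algebra containing the open sets. *)
Lemma borel_preimage (f : A -> B) S :
  continuous_map dA dB f -> borel (metric_open dB) S -> borel (metric_open dA) (fun a => S (f a)).
Proof.
  intros Hf HS SA (H0 & Hc & Hu) Hop. apply (HS (fun U => SA (fun a => U (f a)))).
  - split; [exact H0|split].
    + intros U HU. apply (Hc (fun a => U (f a))), HU.
    + intros U HU. apply (Hu (fun n a => U n (f a))), HU.
  - intros U HU. apply Hop, metric_open_preimage; auto.
Qed.

(* The set where [f] and [g] differ is open. *)
Lemma borel_eq (f g : A -> B) : is_metric dB ->
  continuous_map dA dB f -> continuous_map dA dB g -> borel (metric_open dA) (fun a => f a = g a).
Proof.
  intros (Hpos & H0 & Hsym & Htri) Hf Hg.
  apply (borel_ext (fun a => ~ f a <> g a)); [intros a; split; [apply NNPP|tauto]|].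
  apply borel_compl, borel_of_open. intros a Hne. set (e := dB (f a) (g a)).
  assert (He : 0 < e).
  { destruct (Hpos (f a) (g a)) as [|He]; auto. symmetry in He. now apply H0 in He. }
  destruct (Hf a (e / 2)) as (d1 & Hd1 & H1); [lra|].
  destruct (Hg a (e / 2)) as (d2 & Hd2 & H2); [lra|].
  exists (Rmin d1 d2); split; [apply Rmin_pos; auto|]. intros a' Ha' E.
  assert (K1 := H1 a' ltac:(eapply Rlt_le_trans; [exact Ha'|apply Rmin_l])).
  assert (K2 := H2 a' ltac:(eapply Rlt_le_trans; [exact Ha'|apply Rmin_r])).
  assert (T := Htri (f a) (f a') (g a)). rewrite E, (Hsym (g a')) in T.
  rewrite E in K1. unfold e in *. lra.
Qed.

End ContinuousMaps.

Definition Rdist (x y : R) : R := Rabs (x - y).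

Lemma continuous_map_plus {A} (dA : A -> A -> R) (f g : A -> R) :
  continuous_map dA Rdist f -> continuous_map dA Rdist g ->
  continuous_map dA Rdist (fun a => f a + g a).
Proof.
  intros Hf Hg a eps Heps. destruct (Hf a (eps / 2)) as (d1 & Hd1 & H1); [lra|].
  destruct (Hg a (eps / 2)) as (d2 & Hd2 & H2); [lra|].
  exists (Rmin d1 d2); split; [apply Rmin_pos; auto|]. intros a' Ha'. unfold Rdist in *.
  assert (K1 := H1 a' ltac:(eapply Rlt_le_trans; [exact Ha'|apply Rmin_l])).
  assert (K2 := H2 a' ltac:(eapply Rlt_le_trans; [exact Ha'|apply Rmin_r])).
  replace (f a + g a - (f a' + g a')) with ((f a - f a') + (g a - g a')) by ring.
  eapply Rle_lt_trans; [apply Rabs_triang|lra].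
Qed.

Lemma continuous_map_sum {A} (dA : A -> A -> R) (f : nat -> A -> R) n :
  (forall i, continuous_map dA Rdist (f i)) ->
  continuous_map dA Rdist (fun a => sum_f_R0 (fun i => f i a) n).
Proof. intros H; induction n; simpl; auto. apply continuous_map_plus; auto. Qed.

(** * Polish spaces *)

Definition qenum (n : nat) : R :=
  let '(a, k) := Cantor.of_nat n in
  let '(b, c) := Cantor.of_nat k in (INR a - INR b) / INR (S c).

Lemma IZR_Z_to_nat_split m : IZR m = INR (Z.to_nat m) - INR (Z.to_nat (- m)).
Proof. rewrite !INR_IZR_INZ, <- minus_IZR. f_equal. lia. Qed.

(* Witness [up (x (c+1)) / (c+1)] with [1 / (c+1) < eps]. *)
Lemma qenum_dense x eps : 0 < eps -> exists n, Rabs (x - qenum n) < eps.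
Proof.
  intros He. destruct (archimed_cor1 eps He) as (N & HN & HN0).
  destruct N as [|c]; [lia|].
  set (m := up (x * INR (S c))). destruct (archimed (x * INR (S c))) as [A1 A2].
  exists (Cantor.to_nat (Z.to_nat m, Cantor.to_nat (Z.to_nat (- m), c))).
  unfold qenum. rewrite !cancel_of_to. rewrite <- IZR_Z_to_nat_split. fold m in A1, A2.
  assert (Hp : 0 < INR (S c)) by (apply lt_0_INR; lia).
  replace (x - IZR m / INR (S c)) with ((x * INR (S c) - IZR m) / INR (S c)) by (field; lra).
  unfold Rdiv. rewrite Rabs_mult, Rabs_inv, (Rabs_pos_eq (INR (S c))) by lra.
  apply Rle_lt_trans with (1 * / INR (S c)); [|lra].
  apply Rmult_le_compat_r; [left; apply Rinv_0_lt_compat; lra|].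
  rewrite Rabs_left1 by lra. lra.
Qed.

Lemma Rdist_metric : is_metric Rdist.
Proof.
  unfold Rdist. repeat split.
  - intros; apply Rabs_pos.
  - intros H. destruct (Req_dec x y) as [|Hne]; auto.
    exfalso. apply (Rabs_no_R0 (x - y)); [lra|exact H].
  - intros ->. replace (y - y) with 0 by ring. apply Rabs_R0.
  - intros; apply Rabs_minus_sym.
  - intros x y z. replace (x - z) with ((x - y) + (y - z)) by ring. apply Rabs_triang.
Qed.

Lemma polish_Rdist : polish Rdist.
Proof.
  split; [apply Rdist_metric|split].
  - intros u Hu. destruct (R_complete u) as [l Hl].
    + intros e He. destruct (Hu e He) as [N HN]. exists N. intros n m Hn Hm. apply HN; lia.
    + exists l. intros e He. destruct (Hl e He) as [N HN]. exists N. intros n Hn. apply HN; lia.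
  - exists (fun n => Some (qenum n)). intros x e He. destruct (qenum_dense x e He) as [n Hn].
    exists n, (qenum n). auto.
Qed.

Lemma prod_dist_metric {A B} (dA : A -> A -> R) (dB : B -> B -> R) :
  is_metric dA -> is_metric dB -> is_metric (prod_dist dA dB).
Proof.
  intros (A1 & A2 & A3 & A4) (B1 & B2 & B3 & B4). unfold prod_dist. repeat split.
  - intros; eapply Rle_trans; [apply A1|apply Rmax_l].
  - intros H. destruct x as [a b], y as [a' b']; simpl in *.
    assert (dA a a' = 0). { apply Rle_antisym; [rewrite <- H; apply Rmax_l|apply A1]. }
    assert (dB b b' = 0). { apply Rle_antisym; [rewrite <- H; apply Rmax_r|apply B1]. }
    apply A2 in H0. apply B2 in H1. congruence.
  - intros ->. rewrite (proj2 (A2 _ _) eq_refl), (proj2 (B2 _ _) eq_refl). apply Rmax_left; lra.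
  - intros; rewrite A3, B3; auto.
  - intros x y z. apply Rmax_lub.
    + eapply Rle_trans; [apply A4|]. apply Rplus_le_compat; apply Rmax_l.
    + eapply Rle_trans; [apply B4|]. apply Rplus_le_compat; apply Rmax_r.
Qed.

Lemma polish_prod_dist {A B} (dA : A -> A -> R) (dB : B -> B -> R) :
  polish dA -> polish dB -> polish (prod_dist dA dB).
Proof.
  intros (MA & CA & SA) (MB & CB & SB). split; [apply prod_dist_metric; auto|split].
  - intros u Hu. destruct (CA (fun n => fst (u n))) as [a Ha].
    { intros e He. destruct (Hu e He) as [N HN]. exists N; intros m n Hm Hn.
      eapply Rle_lt_trans; [apply Rmax_l|apply HN; auto]. }
    destruct (CB (fun n => snd (u n))) as [b Hb].
    { intros e He. destruct (Hu e He) as [N HN]. exists N; intros m n Hm Hn.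
      eapply Rle_lt_trans; [apply Rmax_r|apply HN; auto]. }
    exists (a, b). intros e He. destruct (Ha e He) as [N1 H1]. destruct (Hb e He) as [N2 H2].
    exists (N1 + N2)%nat. intros n Hn. unfold prod_dist; simpl.
    apply Rmax_lub_lt; [apply H1|apply H2]; lia.
  - destruct SA as [ua Hua], SB as [ub Hub].
    exists (fun n => let '(i, j) := Cantor.of_nat n in
              match ua i, ub j with Some a, Some b => Some (a, b) | _, _ => None end).
    intros [a b] e He. destruct (Hua a e He) as (i & a' & Ei & Ha).
    destruct (Hub b e He) as (j & b' & Ej & Hb). exists (Cantor.to_nat (i, j)), (a', b').
    rewrite cancel_of_to, Ei, Ej. split; auto. unfold prod_dist; simpl. apply Rmax_lub_lt; auto.
Qed.

Lemma Rmin_1_lt x : Rmin 1 x < 1 -> Rmin 1 x = x.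
Proof. unfold Rmin; destruct (Rle_dec 1 x); lra. Qed.

(* Entries are compared through [min 1 dE] and lists of different lengths are at
   distance [1], so that the lists of each length form a clopen copy of [E^k]. *)
Fixpoint list_dist {E} (dE : E -> E -> R) (l m : list E) : R :=
  match l, m with
  | [], [] => 0
  | a :: l', b :: m' => Rmax (Rmin 1 (dE a b)) (list_dist dE l' m')
  | _, _ => 1
  end.

Section ListMetric.

Context {E : Type} (dE : E -> E -> R).

Lemma list_dist_le1 l m : list_dist dE l m <= 1.
Proof.
  revert m; induction l; destruct m; simpl; try lra.
  apply Rmax_lub; auto. apply Rmin_l.
Qed.

Lemma list_dist_nonneg : (forall a b, 0 <= dE a b) -> forall l m, 0 <= list_dist dE l m.
Proof.
  intros H l; induction l; destruct m; simpl; try lra.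
  eapply Rle_trans; [|apply Rmax_l]. unfold Rmin; destruct (Rle_dec 1 (dE a e)); auto; lra.
Qed.

Lemma list_dist_length l m : list_dist dE l m < 1 -> length l = length m.
Proof.
  revert m; induction l; destruct m; simpl; intros H; try lra; auto.
  f_equal. apply IHl. eapply Rle_lt_trans; [apply Rmax_r|eauto].
Qed.

Lemma list_dist_nth e0 : dE e0 e0 = 0 -> forall l m i, list_dist dE l m < 1 ->
  dE (nth i l e0) (nth i m e0) <= list_dist dE l m.
Proof.
  intros H0 l; induction l; destruct m; simpl; intros i H; try lra.
  - destruct i; rewrite H0; lra.
  - destruct i.
    + apply Rle_trans with (Rmin 1 (dE a e)); [|apply Rmax_l].
      right; symmetry; apply Rmin_1_lt. eapply Rle_lt_trans; [apply Rmax_l|eauto].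
    + eapply Rle_trans; [apply IHl|apply Rmax_r]. eapply Rle_lt_trans; [apply Rmax_r|eauto].
Qed.

Lemma continuous_map_nth e0 i : dE e0 e0 = 0 ->
  continuous_map (list_dist dE) dE (fun l => nth i l e0).
Proof.
  intros H0 l eps Heps. exists (Rmin eps 1); split; [apply Rmin_pos; lra|].
  intros m Hm. assert (Hm1 : list_dist dE l m < 1).
  { eapply Rlt_le_trans; [exact Hm|apply Rmin_r]. }
  eapply Rle_lt_trans; [apply list_dist_nth; auto|].
  eapply Rlt_le_trans; [exact Hm|apply Rmin_l].
Qed.

Lemma length_open k : metric_open (list_dist dE) (fun l => length l = k).
Proof.
  intros l Hl. exists 1; split; [lra|].
  intros m Hm. apply list_dist_length in Hm. congruence.
Qed.

Lemma list_dist_triangle : is_metric dE ->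
  forall l m n, list_dist dE l n <= list_dist dE l m + list_dist dE m n.
Proof.
  intros (P & _ & _ & T).
  assert (CN : forall a b l m, 0 <= Rmax (Rmin 1 (dE a b)) (list_dist dE l m)).
  { intros. eapply Rle_trans; [apply (list_dist_nonneg P)|apply Rmax_r]. }
  assert (CL : forall a b l m, Rmax (Rmin 1 (dE a b)) (list_dist dE l m) <= 1).
  { intros. apply Rmax_lub; [apply Rmin_l|apply list_dist_le1]. }
  intros l; induction l as [|a l IH]; intros [|b m] [|c n]; simpl;
    try (repeat match goal with
                | |- context [Rmax (Rmin 1 (dE ?a ?b)) (list_dist dE ?l ?m)] =>
                    generalize (CN a b l m) (CL a b l m);
                    generalize (Rmax (Rmin 1 (dE a b)) (list_dist dE l m)); intros
                end; lra).
  apply Rmax_lub.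
  - assert (Ht := T a b c). assert (Pab := P a b). assert (Pbc := P b c).
    apply Rle_trans with (Rmin 1 (dE a b) + Rmin 1 (dE b c)).
    + unfold Rmin. repeat destruct Rle_dec; lra.
    + apply Rplus_le_compat; apply Rmax_l.
  - eapply Rle_trans; [apply IH|]. apply Rplus_le_compat; apply Rmax_r.
Qed.

Lemma list_dist_metric : is_metric dE -> is_metric (list_dist dE).
Proof.
  intros ME. pose proof ME as (P & Z & S & T). repeat split.
  - apply list_dist_nonneg; auto.
  - revert y; induction x; destruct y; simpl; intros H; try lra; auto.
    assert (H1 : Rmin 1 (dE a e) = 0).
    { apply Rle_antisym; [rewrite <- H; apply Rmax_l|].
      unfold Rmin; destruct Rle_dec; auto; lra. }
    assert (H2 : list_dist dE x y = 0).
    { apply Rle_antisym; [rewrite <- H; apply Rmax_r|apply list_dist_nonneg; auto]. }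
    rewrite Rmin_1_lt in H1 by lra. apply Z in H1. f_equal; auto.
  - intros <-. induction x; simpl; auto. rewrite IHx, (proj2 (Z a a) eq_refl).
    unfold Rmin, Rmax; destruct Rle_dec; destruct Rle_dec; lra.
  - intros x y; revert y; induction x; destruct y; simpl; auto. rewrite S, IHx; auto.
  - apply list_dist_triangle, ME.
Qed.

Lemma list_dist_complete_length : complete dE ->
  forall k (u : nat -> list E), (forall n, length (u n) = k) -> cauchy_seq (list_dist dE) u ->
  exists l, converges_to (list_dist dE) u l.
Proof.
  intros CE k. induction k; intros u Hl Hu.
  - exists []. intros eps Heps. exists 0%nat. intros n _. specialize (Hl n).
    apply length_zero_iff_nil in Hl. rewrite Hl. simpl. lra.
  - assert (e : E). { specialize (Hl 0%nat). destruct (u 0%nat); [discriminate|exact e]. }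
    set (h := fun n => hd e (u n)). set (t := fun n => tl (u n)).
    assert (Hht : forall n, u n = h n :: t n).
    { intros n; unfold h, t; specialize (Hl n); destruct (u n); [discriminate|reflexivity]. }
    destruct (CE h) as [a Ha].
    { intros eps Heps. destruct (Hu (Rmin eps 1)) as [N HN]; [apply Rmin_pos; lra|].
      exists N; intros m n Hm Hn. specialize (HN m n Hm Hn). rewrite !Hht in HN. simpl in HN.
      assert (K : Rmin 1 (dE (h m) (h n)) < Rmin eps 1).
      { eapply Rle_lt_trans; [apply Rmax_l|eauto]. }
      rewrite Rmin_1_lt in K.
      - eapply Rlt_le_trans; [exact K|apply Rmin_l].
      - eapply Rlt_le_trans; [exact K|apply Rmin_r]. }
    destruct (IHk t) as [l Hlim].
    { intros n. specialize (Hl n). rewrite Hht in Hl. simpl in Hl. lia. }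
    { intros eps Heps. destruct (Hu eps Heps) as [N HN]. exists N; intros m n Hm Hn.
      specialize (HN m n Hm Hn). rewrite !Hht in HN. simpl in HN.
      eapply Rle_lt_trans; [apply Rmax_r|eauto]. }
    exists (a :: l). intros eps Heps.
    destruct (Ha eps Heps) as [N1 H1]. destruct (Hlim eps Heps) as [N2 H2].
    exists (N1 + N2)%nat. intros n Hn. rewrite Hht. simpl. apply Rmax_lub_lt.
    + eapply Rle_lt_trans; [apply Rmin_r|]. apply H1; lia.
    + apply H2; lia.
Qed.

(* A Cauchy sequence of lists eventually has constant length. *)
Lemma list_dist_complete : complete dE -> complete (list_dist dE).
Proof.
  intros CE u Hu. destruct (Hu 1) as [N HN]; [lra|].
  set (v := fun n => u (N + n)%nat).
  destruct (list_dist_complete_length CE (length (u N)) v) as [l Hl].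
  - intros n. unfold v. symmetry. apply list_dist_length, HN; lia.
  - intros eps Heps. destruct (Hu eps Heps) as [M HM]. exists M. intros m n Hm Hn. apply HM; lia.
  - exists l. intros eps Heps. destruct (Hl eps Heps) as [M HM]. exists (N + M)%nat.
    intros n Hn. replace n with (N + (n - N))%nat by lia. apply (HM (n - N)%nat). lia.
Qed.

Fixpoint enum_lists (uE : nat -> option E) (k : nat) (n : nat) : option (list E) :=
  match k with
  | O => Some []
  | S k' => let '(i, j) := Cantor.of_nat n in
      match uE i, enum_lists uE k' j with Some a, Some t => Some (a :: t) | _, _ => None end
  end.

Lemma list_dist_separable : separable dE -> separable (list_dist dE).
Proof.
  intros [uE HuE]. exists (fun n => let '(k, m) := Cantor.of_nat n in enum_lists uE k m).
  intros l eps Heps.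
  assert (Hk : exists m y, enum_lists uE (length l) m = Some y /\ list_dist dE l y < eps).
  { induction l as [|a l IH].
    - exists 0%nat, []. simpl. split; auto.
    - destruct IH as (j & t & Ej & Ht). destruct (HuE a eps Heps) as (i & a' & Ei & Ha).
      exists (Cantor.to_nat (i, j)), (a' :: t). cbn [length enum_lists].
      rewrite cancel_of_to, Ei, Ej. split; auto. simpl.
      apply Rmax_lub_lt; auto. eapply Rle_lt_trans; [apply Rmin_r|auto]. }
  destruct Hk as (m & y & Ey & Hy). exists (Cantor.to_nat (length l, m)), y.
  rewrite cancel_of_to. auto.
Qed.

Lemma polish_list_dist : polish dE -> polish (list_dist dE).
Proof.
  intros (M & C & S). split; [apply list_dist_metric, M|split].
  - apply list_dist_complete, C.
  - apply list_dist_separable, S.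
Qed.

End ListMetric.

Lemma Rball_open c dl : metric_open Rdist (fun x => Rabs (x - c) < dl).
Proof.
  intros x Hx. exists (dl - Rabs (x - c)); split; [lra|]. intros y Hy. unfold Rdist in Hy.
  replace (y - c) with ((y - x) + (x - c)) by ring. eapply Rle_lt_trans; [apply Rabs_triang|].
  rewrite Rabs_minus_sym in Hy. lra.
Qed.

Lemma ereal_ball_open c dl : ereal_open (fun e => exists s, e = Fin s /\ Rabs (s - c) < dl).
Proof.
  split.
  - intros r (s & Hs & H). injection Hs as ->. exists (dl - Rabs (s - c)); split; [lra|].
    intros s' Hs'. exists s'; split; auto.
    replace (s' - c) with ((s' - s) + (s - c)) by ring.
    eapply Rle_lt_trans; [apply Rabs_triang|]. lra.
  - intros (s & Hs & _). discriminate.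
Qed.

(* [f y = r] iff for every [n] some rational is [1/(n+1)]-close to both. *)
Lemma borel_graph {Y} (dY : Y -> Y -> R) (f : Y -> ereal) :
  (forall B, borel ereal_open B -> borel (metric_open dY) (fun y => B (f y))) ->
  borel (metric_open (prod_dist dY Rdist)) (fun q => f (fst q) = Fin (snd q)).
Proof.
  intros Hf. pose (near n j t := Rabs (t - qenum j) < / INR (S n)).
  apply (borel_ext (fun q => forall n, exists j,
           (exists s, f (fst q) = Fin s /\ near n j s) /\ near n j (snd q))).
  - intros [y r]; cbn [fst snd]; unfold near. split.
    + intros H. destruct (f y) as [s|] eqn:Ef.
      * f_equal. apply NNPP; intros Hne.
        assert (Hp : 0 < Rabs (s - r) / 2).
        { assert (Hsr : s - r <> 0) by lra. apply Rabs_pos_lt in Hsr. lra. }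
        destruct (archimed_cor1 _ Hp) as (N & HN & HN0). destruct N as [|n]; [lia|].
        destruct (H n) as (j & (s' & Es & H1) & H2). injection Es as <-.
        assert (Rabs (s - r) <= Rabs (s - qenum j) + Rabs (r - qenum j)).
        { replace (s - r) with ((s - qenum j) + (qenum j - r)) by ring.
          rewrite (Rabs_minus_sym r). apply Rabs_triang. }
        lra.
      * destruct (H 0%nat) as (j & (s & Es & _) & _). discriminate.
    + intros Hy n. assert (Hp : 0 < / INR (S n)) by (apply Rinv_0_lt_compat, lt_0_INR; lia).
      destruct (qenum_dense r _ Hp) as [j Hj]. exists j. split; [exists r; split|]; auto.
  - apply borel_countable_inter; intros n. apply borel_countable_union; intros j.
    apply borel_and.
    + apply (borel_preimage (dB := dY) (fun q => fst q)
               (fun y => exists s, f y = Fin s /\ near n j s)).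
      * exact (continuous_map_fst _ continuous_map_id).
      * apply (Hf (fun e => exists s, e = Fin s /\ near n j s)).
        apply borel_of_open, ereal_ball_open.
    + apply (borel_preimage (dB := Rdist) (fun q => snd q) (near n j)).
      * exact (continuous_map_snd _ continuous_map_id).
      * apply borel_of_open, Rball_open.
Qed.

Lemma analytic_empty {Y} (dY : Y -> Y -> R) (A : Y -> Prop) :
  (forall y, ~ A y) -> analytic dY A.
Proof.
  intros HA. exists unit, (fun _ _ => 0). split.
  - split; [|split].
    + repeat split; intros; try lra. destruct x, y; auto.
    + intros u _. exists tt. intros e He. exists 0%nat. intros. lra.
    + exists (fun _ => Some tt). intros [] e He. exists 0%nat, tt. auto.
  - exists (fun _ => False). split; [apply borel_empty|].
    intros y; split; [intros H; now apply HA in H|]. intros [_ []].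
Qed.

(** * Analyticity of [Gprime] *)

Section GprimeAnalytic.

Context {X Z : Type} (d : X -> X -> R) (dZ : Z -> Z -> R) (dL : X -> X -> ereal)
  (G : X * X -> Prop) (B : (X * X) * Z -> Prop).
Hypotheses (Hd : polish d) (HdZ : polish dZ) (HdL : borel_fun d dL)
  (HB : borel (metric_open (prod_dist (prod_dist d d) dZ)) B)
  (HGB : forall p, G p <-> exists z, B (p, z))
  (Gfin : forall p, G p -> dL (fst p) (snd p) <> PInf).

(* An entry [(((w_i, z_i), zeta_i), (r_i, s_i))] records a point of [G] with its witness
   [B ((w_i, z_i), zeta_i)] and the real values [r_i = dL w_(i+1) z_i], [s_i = dL w_i z_i]. *)
Definition entry : Type := (((X * X) * Z) * (R * R))%type.

Definition entry_dist : entry -> entry -> R :=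
  prod_dist (prod_dist (prod_dist d d) dZ) (prod_dist Rdist Rdist).

Variable e0 : entry.

Definition entry_at (l : list entry) (i : nat) : entry := nth i l e0.
Definition chain_w (l : list entry) (i : nat) : X := fst (fst (fst (entry_at l i))).
Definition chain_z (l : list entry) (i : nat) : X := snd (fst (fst (entry_at l i))).
Definition chain_r (l : list entry) (i : nat) : R := fst (snd (entry_at l i)).
Definition chain_s (l : list entry) (i : nat) : R := snd (snd (entry_at l i)).

Definition chain_code (q : (X * X) * list entry) : Prop :=
  let l := snd q in
  exists k, length l = S k /\
    ((forall i, (i <= k)%nat ->
        B (fst (entry_at l i)) /\
        (dL (cyc_next (chain_w l) k i) (chain_z l i) = Fin (chain_r l i) /\
         dL (chain_w l i) (chain_z l i) = Fin (chain_s l i))) /\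
     (chain_w l 0 = fst (fst q) /\ (chain_z l k = snd (fst q) /\
      sum_f_R0 (chain_r l) k = sum_f_R0 (chain_s l) k))).

Let P := prod_dist (prod_dist d d) (list_dist entry_dist).

Lemma continuous_map_entry_at i : continuous_map P entry_dist (fun q => entry_at (snd q) i).
Proof.
  apply (continuous_map_comp (dB := list_dist entry_dist) (fun q => snd q) (fun l => nth i l e0)).
  - exact (continuous_map_snd _ continuous_map_id).
  - apply continuous_map_nth. destruct HdZ as (MZ & _), Hd as (Md & _).
    assert (Mentry : is_metric entry_dist).
    { repeat apply prod_dist_metric; auto using Rdist_metric. }
    now apply Mentry.
Qed.

Lemma borel_dL_eq (a b : (X * X) * list entry -> X) (r : (X * X) * list entry -> R) :
  continuous_map P d a -> continuous_map P d b -> continuous_map P Rdist r ->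
  borel (metric_open P) (fun q => dL (a q) (b q) = Fin (r q)).
Proof.
  intros Ha Hb Hr.
  apply (borel_preimage (dB := prod_dist (prod_dist d d) Rdist) (fun q => ((a q, b q), r q))
           (fun t => dL (fst (fst t)) (snd (fst t)) = Fin (snd t))).
  - repeat apply continuous_map_pair; auto.
  - exact (borel_graph _ (fun p => dL (fst p) (snd p)) HdL).
Qed.

Lemma borel_chain_code : borel (metric_open P) chain_code.
Proof.
  assert (Hw : forall i, continuous_map P d (fun q => chain_w (snd q) i)).
  { intros i. do 3 eapply continuous_map_fst. apply continuous_map_entry_at. }
  assert (Hz : forall i, continuous_map P d (fun q => chain_z (snd q) i)).
  { intros i. eapply continuous_map_snd. do 2 eapply continuous_map_fst.
    apply continuous_map_entry_at. }
  assert (Hr : forall i, continuous_map P Rdist (fun q => chain_r (snd q) i)).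
  { intros i. eapply continuous_map_fst, continuous_map_snd, continuous_map_entry_at. }
  assert (Hs : forall i, continuous_map P Rdist (fun q => chain_s (snd q) i)).
  { intros i. do 2 eapply continuous_map_snd. apply continuous_map_entry_at. }
  apply borel_countable_union. intros k. repeat apply borel_and.
  - apply (borel_preimage (dB := list_dist entry_dist) (fun q => snd q) (fun l => length l = S k)).
    + exact (continuous_map_snd _ continuous_map_id).
    + apply borel_of_open, length_open.
  - apply borel_countable_inter. intros i. destruct (le_dec i k) as [Hi|Hi].
    + apply (borel_ext (fun q => B (fst (entry_at (snd q) i)) /\
          (dL (cyc_next (chain_w (snd q)) k i) (chain_z (snd q) i) = Fin (chain_r (snd q) i) /\
           dL (chain_w (snd q) i) (chain_z (snd q) i) = Fin (chain_s (snd q) i)))).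
      { intros q. split; auto. }
      repeat apply borel_and; [|apply borel_dL_eq; auto..].
      * apply (borel_preimage (dB := prod_dist (prod_dist d d) dZ)
                 (fun q => fst (entry_at (snd q) i)) B); auto.
        eapply continuous_map_fst, continuous_map_entry_at.
      * unfold cyc_next. destruct (Nat.eqb i k); auto.
    + apply (borel_ext (fun _ => True)); [intros q; split; auto; lia|apply borel_full].
  - apply (borel_eq (dB := d)); [apply Hd|apply Hw|].
    eapply continuous_map_fst. exact (continuous_map_fst _ continuous_map_id).
  - apply (borel_eq (dB := d)); [apply Hd|apply Hz|].
    eapply continuous_map_snd. exact (continuous_map_fst _ continuous_map_id).
  - apply (borel_eq (dB := Rdist)); [apply Rdist_metric|apply continuous_map_sum; auto..].
Qed.

Lemma Gprime_chain_code p : Gprime dL G p <-> exists l, chain_code (p, l).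
Proof.
  split.
  - intros (I & w & z & HG & H0 & HI & Heq).
    assert (Hlinks := Gprime_links_fin dL G Gfin I w z HG Heq).
    destruct (list_choice e0 (fun i e => fst (fst e) = (w i, z i) /\ B (fst e) /\
        dL (cyc_next w I i) (z i) = Fin (fst (snd e)) /\ dL (w i) (z i) = Fin (snd (snd e))) I)
      as (l & Hlen & Hl).
    { intros i Hi. destruct (proj1 (HGB _) (HG i Hi)) as [zeta Hzeta].
      destruct (dL (cyc_next w I i) (z i)) as [r|] eqn:Er; [|now destruct (Hlinks i Hi)].
      destruct (dL (w i) (z i)) as [s|] eqn:Es; [|now destruct (Gfin _ (HG i Hi))].
      exists (((w i, z i), zeta), (r, s)). auto. }
    assert (Hwz : forall i, (i <= I)%nat -> chain_w l i = w i /\ chain_z l i = z i).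
    { intros i Hi. unfold chain_w, chain_z, entry_at. now rewrite (proj1 (Hl i Hi)). }
    assert (Hcyc : forall i, (i <= I)%nat -> cyc_next (chain_w l) I i = cyc_next w I i).
    { intros i Hi. unfold cyc_next. destruct (Nat.eqb_spec i I); apply Hwz; lia. }
    exists l, I. cbn [fst snd]. split; [exact Hlen|split; [|split; [|split]]].
    + intros i Hi. rewrite Hcyc, (proj1 (Hwz i Hi)), (proj2 (Hwz i Hi)) by auto. apply Hl, Hi.
    + rewrite <- H0. apply Hwz; lia.
    + rewrite <- HI. apply Hwz; lia.
    + rewrite (esum_Fin _ (chain_r l)), (esum_Fin _ (chain_s l)) in Heq; [congruence|..];
        intros i Hi; apply Hl, Hi.
  - intros (l & k & _ & Hc & Hw0 & Hzk & Hsum). cbn [fst snd] in *.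
    exists k, (chain_w l), (chain_z l). split; [|split; [exact Hw0|split; [exact Hzk|]]].
    + intros i Hi. apply HGB. exists (snd (fst (entry_at l i))).
      unfold chain_w, chain_z. rewrite <- !surjective_pairing. apply Hc, Hi.
    + rewrite (esum_Fin _ (chain_r l)), (esum_Fin _ (chain_s l)); [congruence|..];
        intros i Hi; apply Hc, Hi.
Qed.

End GprimeAnalytic.

Lemma Gprime_analytic {X : Type} (d : X -> X -> R) (dL : X -> X -> ereal) (G : X * X -> Prop) :
  polish d -> borel_fun d dL -> (forall p, G p -> dL (fst p) (snd p) <> PInf) ->
  analytic (prod_dist d d) G -> analytic (prod_dist d d) (Gprime dL G).
Proof.
  intros Hd HdL Gfin (Z & dZ & HdZ & B & HB & HGB).
  destruct (classic (exists q, B q)) as [[[p0 z0] _] | Hempty].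
  - set (e0 := (((p0, z0), (0, 0)) : entry)).
    exists (list entry), (list_dist (entry_dist d dZ)). split.
    { apply polish_list_dist. repeat apply polish_prod_dist; auto using polish_Rdist. }
    exists (chain_code dL B e0). split.
    + apply borel_chain_code; auto.
    + intros p. now apply Gprime_chain_code.
  - apply analytic_empty. intros p (I & w & z & HG & _). apply Hempty.
    destruct (proj1 (HGB _) (HG 0%nat (Nat.le_0_l I))) as [zeta Hzeta]. eauto.
Qed.

Theorem lemma3p1 (X : Type) (d : X -> X -> R) (dL : X -> X -> ereal)
  (HX : polish d) (HdL : ext_distance dL) (HB : borel_fun d dL)
  (G : X * X -> Prop)
  (Hfin : forall p, G p -> dL (fst p) (snd p) <> PInf) :
  ((forall p, G p -> Gprime dL G p) /\
   (forall p, Gprime dL G p -> dL (fst p) (snd p) <> PInf)) /\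
  (analytic (prod_dist d d) G -> analytic (prod_dist d d) (Gprime dL G)) /\
  (cyc_mono dL G -> cyc_mono dL (Gprime dL G)).
Proof.
  split; [split|split].
  - apply Gprime_incl.
  - apply Gprime_fin; auto.
  - apply Gprime_analytic; auto.
  - apply cyc_mono_Gprime, Hfin.
Qed.
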